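(* Define: - $K_n=\overline{\Sigma}_c^{-1}H_n^TR_n^{-1}$; - $\mathcal{K}=\mathrm{diag}(K_1,\dots,K_N)$ (block diagonal); - $\mathcal{H}=\mathrm{diag}(H_1,\dots,H_N)$ (block diagonal). Then for every $0<\varepsilon<1$ there exist a deterministic time $t_\varepsilon$ and a constant $c_\varepsilon$ such that $$\mathbf{z}^T\big(\beta_t\overline{L}\otimes I_M+\alpha_t\widetilde{\mathcal{K}}\mathcal{H}\big)\mathbf{z}\ge c_\varepsilon\beta_t\|\mathbf{z}_{\mathcal{C}^\perp}\|^2$$ for all $t\ge t_\varepsilon$, all $\mathbf{z}\in\mathbb{R}^{NM}$, and all matrices $\widetilde{\mathcal{K}}\in\mathbb{R}^{NM\times\sum_nM_n}$ with $\|\widetilde{\mathcal{K}}\mathcal{H}-\mathcal{K}\mathcal{H}\|\le\varepsilon$.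
   Context: The data are as follows. - $H_n\in\mathbb{R}^{M_n\times M}$ for $n=1,\dots,N$. - $R_n$ are symmetric positive definite $M_n\times M_n$ matrices. - $\overline{\Sigma}_c=\frac1N\sum_{n=1}^NH_n^TR_n^{-1}H_n$ is assumed invertible. - $\overline{L}$ is the expectation of a random $N\times N$ graph Laplacian of simple undirected graphs on $\{1,\dots,N\}$, with $\lambda_2(\overline{L})>0$, where $\lambda_2$ is the second smallest eigenvalue. - The weights are $\alpha_t=a/(t+1)^{\tau_1}$ and $\beta_t=b/(t+1)^{\tau_2}$ with $a,b>0$, $0<\tau_2\le\tau_1\le1$, and $\tau_1>\tau_2+\frac1{2+\varepsilon_1}+\frac12$ for some $\varepsilon_1>0$. The consensus subspace is $\mathcal{C}=\{\mathbf{1}_N\otimes\mathbf{a}:\mathbf{a}\in\mathbb{R}^M\}$, and $\mathbf{z}_{\mathcal{C}^\perp}$ is the orthogonal projection of $\mathbf{z}$ onto the orthogonal complement $\mathcal{C}^\perp$. $\otimes$ is the Kronecker product and $\|\cdot\|$ the Euclidean norm or induced matrix 2-norm. *)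

From HB Require Import structures.
From mathcomp Require Import all_boot all_order all_algebra.
From mathcomp Require Import all_classical all_reals all_analysis.
Set Implicit Arguments. Unset Strict Implicit. Unset Printing Implicit Defensive.
Import Order.TTheory GRing.Theory Num.Theory.
Local Open Scope ring_scope.

Section Defs.
Variable R : realType.

Definition vnorm (n : nat) (x : 'cV[R]_n) : R := Num.sqrt (\sum_i (x i 0) ^+ 2).

Definition qform (n : nat) (z : 'cV[R]_n) (A : 'M[R]_n) : R := (z^T *m A *m z) 0 0.

Definition opnorm (m n : nat) (A : 'M[R]_(m, n)) : R :=
  sup [set vnorm (A *m x) | x in [set x : 'cV[R]_n | vnorm x = 1]].

Definition spd (n : nat) (A : 'M[R]_n) : Prop :=
  A^T = A /\ forall x : 'cV[R]_n, x != 0 -> 0 < qform x A.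

Definition sorted_spectrum (n : nat) (A : 'M[R]_n) (s : seq R) : Prop :=
  sorted <=%R s /\ char_poly A = \prod_(x <- s) ('X - x%:P).

(* lambda_2(A) > 0 : the second smallest eigenvalue is positive *)
Definition lambda2_pos (n : nat) (A : 'M[R]_n) : Prop :=
  exists s, sorted_spectrum A s /\ 0 < s`_1.

Definition graph (N : nat) := {ffun 'I_N * 'I_N -> bool}.

Definition simple_graph (N : nat) (G : graph N) : bool :=
  [forall i, forall j, G (i, j) == G (j, i)] && [forall i, ~~ G (i, i)].

Definition laplacian (N : nat) (G : graph N) : 'M[R]_N :=
  \matrix_(i, j) ((if i == j then (#|[set k | G (i, k)]|)%:R else 0) - (G (i, j))%:R).

Definition graph_distribution (N : nat) (p : {ffun graph N -> R}) : Prop :=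
  (forall G, 0 <= p G) /\ \sum_G p G = 1 /\ (forall G, p G != 0 -> simple_graph G).

Definition Lbar (N : nat) (p : {ffun graph N -> R}) : 'M[R]_N :=
  \sum_G p G *: laplacian G.

(* Lbar (x) I_M, with R^{NM} written as the block space of dimension \sum_(i<N) M *)
Definition kronI (N M : nat) (L : 'M[R]_N) : 'M[R]_(\sum_(i < N) M) :=
  \mxblock_(i < N, j < N) ((L i j)%:M : 'M[R]_(M, M)).

(* consensus vector 1_N (x) a *)
Definition cons_vec (N M : nat) (a : 'cV[R]_M) : 'cV[R]_(\sum_(i < N) M) :=
  \mxcol_(i < N) a.

Definition is_Cperp_proj (N M : nat) (z w : 'cV[R]_(\sum_(i < N) M)) : Prop :=
  (exists a : 'cV[R]_M, z - w = cons_vec N a) /\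
  (forall a : 'cV[R]_M, (cons_vec N a)^T *m w = 0).

Section Obs.
Variables (N M : nat) (Mn : 'I_N -> nat).
Variables (H : forall n : 'I_N, 'M[R]_(Mn n, M)) (Rm : forall n : 'I_N, 'M[R]_(Mn n)).

Definition Sigma_c : 'M[R]_M :=
  (N%:R)^-1 *: \sum_(n < N) ((H n)^T *m invmx (Rm n) *m H n).

Definition Kgain (n : 'I_N) : 'M[R]_(M, Mn n) :=
  invmx Sigma_c *m (H n)^T *m invmx (Rm n).

Definition calK : 'M[R]_(\sum_(i < N) M, \sum_(i < N) Mn i) :=
  \mxblock_(i < N, j < N) (if i == j then Kgain j else 0 : 'M[R]_(M, Mn j)).

Definition calH : 'M[R]_(\sum_(i < N) Mn i, \sum_(i < N) M) :=
  \mxblock_(i < N, j < N) (if i == j then H i else 0 : 'M[R]_(Mn i, M)).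
End Obs.

Definition alpha_w (a tau1 : R) (t : nat) : R := a / ((t.+1)%:R `^ tau1).
Definition beta_w (b tau2 : R) (t : nat) : R := b / ((t.+1)%:R `^ tau2).

End Defs.

From HB Require Import structures.
From mathcomp Require Import all_boot all_order all_algebra.
From mathcomp Require Import all_classical all_reals all_analysis.
From mathcomp Require Import ring lra.
Import Order.TTheory GRing.Theory Num.Theory.
Set Implicit Arguments. Unset Strict Implicit. Unset Printing Implicit Defensive.
Local Open Scope ring_scope.

(* Write z = u + w with u in the consensus subspace C and w its projection on C^perp.
   Since lambda_2(Lbar) > 0, the eigenvalue 0 of Lbar is simple, with eigenvector 1, so
   Lbar is coercive on the sum-zero vectors and Lbar (x) I_M is coercive on C^perp, with
   some constant lam: z^T (Lbar (x) I_M) z >= lam |w|^2.  On C the nominal gain is the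
   identity, because sum_n K_n H_n = N I_M; hence, completing the square in |u|, every
   Kt with ||Kt calH - calK calH|| <= eps < 1 satisfies z^T Kt calH z >= - D |w|^2 for a
   constant D independent of Kt and t.  As alpha_t / beta_t -> 0, eventually
   alpha_t D <= beta_t lam / 2, which gives the claim with c_eps = lam / 2. *)

Section BilinearForms.
Variable R : realType.
Implicit Types (n : nat) (c : R).

Definition vdot n (x y : 'cV[R]_n) : R := (x^T *m y) 0 0.
Definition bform n (A : 'M[R]_n) (x y : 'cV[R]_n) : R := (x^T *m A *m y) 0 0.

Lemma vdotE n (x y : 'cV[R]_n) : vdot x y = \sum_i x i 0 * y i 0.
Proof. by rewrite /vdot mxE; apply: eq_bigr => i _; rewrite mxE. Qed.

Lemma vdotC n (x y : 'cV[R]_n) : vdot x y = vdot y x.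
Proof. by rewrite !vdotE; apply: eq_bigr => i _; rewrite mulrC. Qed.

Lemma vdotxx_ge0 n (x : 'cV[R]_n) : 0 <= vdot x x.
Proof. by rewrite vdotE; apply: sumr_ge0 => i _; rewrite -expr2 sqr_ge0. Qed.

Lemma vdotxx_eq0 n (x : 'cV[R]_n) : vdot x x = 0 -> x = 0.
Proof.
rewrite vdotE => /eqP; rewrite psumr_eq0 => [/allP x0|i _]; last by rewrite -expr2 sqr_ge0.
apply/matrixP => i j; rewrite (ord1 j) mxE.
by have /implyP/(_ isT) := x0 i (mem_index_enum i); rewrite mulf_eq0 orbb => /eqP.
Qed.

Lemma vnorm_sqr n (x : 'cV[R]_n) : vnorm x ^+ 2 = vdot x x.
Proof.
rewrite /vnorm sqr_sqrtr; last by apply: sumr_ge0 => i _; rewrite sqr_ge0.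
by rewrite vdotE; apply: eq_bigr => i _; rewrite expr2.
Qed.

Lemma vnorm_ge0 n (x : 'cV[R]_n) : 0 <= vnorm x.
Proof. exact: sqrtr_ge0. Qed.

Lemma vnormE n (x : 'cV[R]_n) : vnorm x = Num.sqrt (vdot x x).
Proof. by rewrite -vnorm_sqr sqrtr_sqr ger0_norm // vnorm_ge0. Qed.

Lemma vnormZ n c (x : 'cV[R]_n) : vnorm (c *: x) = `|c| * vnorm x.
Proof.
rewrite !vnormE -sqrtr_sqr -sqrtrM ?sqr_ge0 //; congr Num.sqrt.
by rewrite !vdotE mulr_sumr; apply: eq_bigr => i _; rewrite !mxE; ring.
Qed.

Lemma vnorm_eq0 n (x : 'cV[R]_n) : (vnorm x == 0) = (x == 0).
Proof.
apply/eqP/eqP => [x0|->]; last by rewrite vnormE /vdot trmx0 mul0mx mxE sqrtr0.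
by apply: vdotxx_eq0; rewrite -vnorm_sqr x0 expr0n.
Qed.

Lemma vnorm0 n : vnorm (0 : 'cV[R]_n) = 0.
Proof. by apply/eqP; rewrite vnorm_eq0. Qed.

Lemma ler_norm_entry_vnorm n (x : 'cV[R]_n) i : `|x i 0| <= vnorm x.
Proof.
rewrite -sqrtr_sqr /vnorm ler_sqrt; last by apply: sumr_ge0 => k _; rewrite sqr_ge0.
by rewrite (bigD1 i) //= lerDl; apply: sumr_ge0 => k _; rewrite sqr_ge0.
Qed.

Lemma bformE n (A : 'M[R]_n) x y : bform A x y = vdot x (A *m y).
Proof. by rewrite /bform /vdot mulmxA. Qed.

Lemma bform1 n (x y : 'cV[R]_n) : bform 1%:M x y = vdot x y.
Proof. by rewrite /bform mulmx1. Qed.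

Lemma bformDl n (A : 'M[R]_n) x1 x2 y : bform A (x1 + x2) y = bform A x1 y + bform A x2 y.
Proof. by rewrite /bform linearD /= !mulmxDl mxE. Qed.

Lemma bformDr n (A : 'M[R]_n) x y1 y2 : bform A x (y1 + y2) = bform A x y1 + bform A x y2.
Proof. by rewrite /bform !mulmxDr mxE. Qed.

Lemma bformZl n (A : 'M[R]_n) c x y : bform A (c *: x) y = c * bform A x y.
Proof. by rewrite /bform linearZ /= -!scalemxAl mxE. Qed.

Lemma bformZr n (A : 'M[R]_n) c x y : bform A x (c *: y) = c * bform A x y.
Proof. by rewrite /bform -!scalemxAr mxE. Qed.

Lemma bformDm n (A B : 'M[R]_n) x y : bform (A + B) x y = bform A x y + bform B x y.
Proof. by rewrite /bform mulmxDr mulmxDl mxE. Qed.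

Lemma bformZm n (A : 'M[R]_n) c x y : bform (c *: A) x y = c * bform A x y.
Proof. by rewrite /bform -scalemxAr -scalemxAl mxE. Qed.

Lemma bform_sum n (I : finType) (F : I -> 'M[R]_n) x y :
  bform (\sum_k F k) x y = \sum_k bform (F k) x y.
Proof. by rewrite /bform mulmx_sumr mulmx_suml summxE. Qed.

Lemma bformC n (A : 'M[R]_n) x y : A^T = A -> bform A x y = bform A y x.
Proof.
move=> As; rewrite /bform -[in RHS](trmxK x) -[in RHS]As.
by rewrite -!trmx_mul [(_^T) 0 0]mxE mulmxA.
Qed.

Lemma bform_entries n (A : 'M[R]_n) x y :
  bform A x y = \sum_i \sum_j x i 0 * A i j * y j 0.
Proof.
rewrite /bform mxE exchange_big /=; apply: eq_bigr => j _; rewrite mxE mulr_suml.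
by apply: eq_bigr => i _; rewrite !mxE.
Qed.

Lemma bform_bounded n (A : 'M[R]_n) : exists2 C, 0 <= C &
  forall x y, `|bform A x y| <= C * vnorm x * vnorm y.
Proof.
exists (\sum_i \sum_j `|A i j|) => [|x y].
  by apply: sumr_ge0 => i _; apply: sumr_ge0.
rewrite bform_entries !mulr_suml; apply: (le_trans (ler_norm_sum _ _ _)).
apply: ler_sum => i _; rewrite !mulr_suml.
apply: (le_trans (ler_norm_sum _ _ _)); apply: ler_sum => j _.
rewrite !normrM (mulrC `|x i 0|) -!mulrA ler_wpM2l //.
by rewrite ler_pM ?ler_norm_entry_vnorm.
Qed.

End BilinearForms.

Section PositiveSemidefinite.
Variable R : realType.

Definition psd n (A : 'M[R]_n) : Prop := A^T = A /\ forall v, 0 <= bform A v v.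

Lemma psd_CauchySchwarz n (A : 'M[R]_n) x y : psd A ->
  bform A x y ^+ 2 <= bform A x x * bform A y y.
Proof.
move=> [As A_ge0].
have quad t : 0 <= bform A x x + 2 * t * bform A x y + t ^+ 2 * bform A y y.
  have := A_ge0 (x + t *: y).
  by rewrite !bformDl !bformDr !bformZl !bformZr (bformC x y As); congr (_ <= _); ring.
move: quad (A_ge0 x) (A_ge0 y).
set a := bform A x x; set b := bform A x y; set c := bform A y y => quad a0 c0.
have [c_eq0|c_neq0] := eqVneq c 0.
  have [->|b_neq0] := eqVneq b 0; first by rewrite expr0n mulr_ge0.
  have := quad (- (a + 1) / (2 * b)); rewrite c_eq0 mulr0 addr0.
  have -> : 2 * (- (a + 1) / (2 * b)) * b = - (a + 1) by field.
  lra.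
have c_gt0 : 0 < c by rewrite lt_neqAle eq_sym c_neq0.
have := quad (- b / c).
have -> : a + 2 * (- b / c) * b + (- b / c) ^+ 2 * c = a - b ^+ 2 / c by field.
by rewrite subr_ge0 ler_pdivrMr.
Qed.

Lemma psd1 n : psd (1%:M : 'M[R]_n).
Proof. by split=> [|v]; rewrite ?trmx1 // bform1 vdotxx_ge0. Qed.

Lemma vdot_CauchySchwarz n (x y : 'cV[R]_n) : `|vdot x y| <= vnorm x * vnorm y.
Proof.
have := psd_CauchySchwarz x y (psd1 n); rewrite !bform1.
rewrite -sqrtr_sqr !vnormE -sqrtrM ?vdotxx_ge0 // => CS.
by rewrite ler_sqrt // mulr_ge0 // vdotxx_ge0.
Qed.

Lemma psd_bform_eq0 n (A : 'M[R]_n) x : psd A -> bform A x x = 0 -> A *m x = 0.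
Proof.
move=> Apsd Ax0; apply: vdotxx_eq0; apply/eqP.
have := psd_CauchySchwarz (A *m x) x Apsd; rewrite Ax0 mulr0 bformE.
by rewrite -sqrf_eq0 eq_le sqr_ge0 andbT.
Qed.

End PositiveSemidefinite.

Section OperatorNorm.
Variable R : realType.

Lemma vnorm_mulmx_sqr m n (A : 'M[R]_(m, n)) y :
  vnorm (A *m y) ^+ 2 = bform (A^T *m A) y y.
Proof. by rewrite vnorm_sqr /vdot /bform trmx_mul !mulmxA. Qed.

Lemma has_sup_opnorm m n (A : 'M[R]_(m, n)) (x : 'cV[R]_n) : vnorm x = 1 ->
  has_sup [set vnorm (A *m y) | y in [set y : 'cV[R]_n | vnorm y = 1]].
Proof.
move=> x1; split; first by exists (vnorm (A *m x)), x.
have [C C0 hC] := bform_bounded (A^T *m A).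
exists (1 + C) => _ [y /= y1 <-].
have := hC y y; rewrite y1 !mulr1 -vnorm_mulmx_sqr => /(le_trans (ler_norm _)).
have := vnorm_ge0 (A *m y); nra.
Qed.

Lemma opnorm_ler m n (A : 'M[R]_(m, n)) x : vnorm (A *m x) <= opnorm A * vnorm x.
Proof.
have [->|x0] := eqVneq x 0; first by rewrite mulmx0 !vnorm0 mulr0.
have vx0 : 0 < vnorm x by rewrite lt_neqAle vnorm_ge0 eq_sym vnorm_eq0 x0.
set u := (vnorm x)^-1 *: x.
have u1 : vnorm u = 1 by rewrite vnormZ ger0_norm ?invr_ge0 ?vnorm_ge0 // mulVf // gt_eqF.
have := sup_upper_bound (has_sup_opnorm A u1) (ex_intro2 _ _ u u1 erefl).
rewrite -scalemxAr vnormZ ger0_norm ?invr_ge0 ?vnorm_ge0 //.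
by rewrite ler_pdivrMl // mulrC.
Qed.

Lemma bform_opnorm_bound n (A : 'M[R]_n) x y :
  `|bform A x y| <= opnorm A * vnorm x * vnorm y.
Proof.
rewrite bformE mulrAC; apply: le_trans (vdot_CauchySchwarz _ _) _.
by rewrite mulrC ler_wpM2r ?vnorm_ge0 ?opnorm_ler.
Qed.

Lemma psd_coercive n (A : 'M[R]_n) : psd A -> A \in unitmx ->
  exists2 lam, 0 < lam & forall v, lam * vdot v v <= bform A v v.
Proof.
move=> Apsd Aunit; have [C C0 hC] := bform_bounded A.
set K := opnorm (invmx A).
have den_gt0 : 0 < C * K ^+ 2 + 1 := ltr_pwDr ltr01 (mulr_ge0 C0 (sqr_ge0 K)).
exists (C * K ^+ 2 + 1)^-1 => [|v]; first by rewrite invr_gt0.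
set y := invmx A *m v.
have Ay : bform A v y = vdot v v by rewrite bformE mulKVmx.
have y_le : vnorm y <= K * vnorm v := opnorm_ler _ v.
have Ayy : bform A y y <= C * (K * vnorm v) ^+ 2.
  apply: le_trans (ler_norm _) _; apply: le_trans (hC y y) _.
  rewrite -mulrA -expr2 ler_wpM2l //.
  by apply: lerXn2r; rewrite ?nnegrE ?vnorm_ge0 // (le_trans (vnorm_ge0 _) y_le).
rewrite exprMn vnorm_sqr mulrA in Ayy.
have := psd_CauchySchwarz v y Apsd; rewrite Ay.
have := vdotxx_ge0 v; have := Apsd.2 v.
set vv := vdot v v; set q := bform A v v => q0 vv0 CS.
have CS' : vv * vv <= (q * (C * K ^+ 2)) * vv.
  by rewrite -expr2 -mulrA; apply: le_trans CS _; rewrite ler_wpM2l.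
rewrite ler_pdivrMl //; have [vv_eq0|vv_neq0] := eqVneq vv 0.
  by rewrite vv_eq0 mulr_ge0 // ltW.
have vv_gt0 : 0 < vv by rewrite lt_neqAle eq_sym vv_neq0.
by move: CS'; rewrite ler_pM2r //; nra.
Qed.

End OperatorNorm.

Section CharPolyKernel.
Variable F : fieldType.

Lemma row_ebase_left_kernel r n (A : 'M[F]_n) (U : 'M[F]_(r, n)) :
  row_free U -> U *m A = 0 -> forall (k j : 'I_n), (k < r)%N -> (row_ebase U *m A) k j = 0.
Proof.
move=> /eqP rU UA0 k j kr.
set C := col_ebase U.
have hE : pid_mx r *m row_ebase U = invmx C *m U.
  by rewrite -[in RHS](mulmx_ebase U) rU -!mulmxA mulKmx // col_ebase_unit.
have : (pid_mx r *m row_ebase U *m A) (Ordinal kr) j = 0.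
  by rewrite hE -mulmxA UA0 mulmx0 mxE.
rewrite -mulmxA mxE (bigD1 k) //= mxE eqxx kr mul1r big1 ?addr0 // => l lk.
by rewrite mxE /= (_ : (k == l :> nat) = false) ?mul0r //; apply/negbTE; rewrite eq_sym.
Qed.

Lemma char_poly_dvd_left_kernel r n (A : 'M[F]_n) (U : 'M[F]_(r, n)) :
  row_free U -> U *m A = 0 -> 'X ^+ r %| char_poly A.
Proof.
move=> Ufree UA0; have rn : (r <= n)%N by rewrite -(eqP Ufree) rank_leq_col.
set E := row_ebase U; set Ep := map_mx polyC E.
have EA0 := row_ebase_left_kernel Ufree UA0.
set d := \row_(k < n) (if (k < r)%N then 'X else 1 : {poly F}).
set Q := \matrix_(k, j) (if (k < r)%N then Ep k j else (Ep *m char_poly_mx A) k j).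
(* The first r rows of E *m char_poly_mx A are 'X times those of E. *)
have factor : Ep *m char_poly_mx A = diag_mx d *m Q.
  apply/matrixP => k j; rewrite mul_diag_mx [RHS]mxE [d 0 k]mxE [Q k j]mxE.
  case: ifP => kr; last by rewrite mul1r.
  have := EA0 k j kr; rewrite mxE => EAkj.
  by rewrite /char_poly_mx mulmxBr mul_mx_scalar -map_mxM !mxE EAkj rmorph0 subr0.
have prod_d : \prod_(k < n) d 0 k = 'X ^+ r.
  under eq_bigr do rewrite mxE.
  rewrite -big_mkcond /= -(big_ord_widen n (fun _ => 'X)) //.
  by rewrite prodr_const card_ord.
have := congr1 determinant factor.
rewrite !det_mulmx det_diag prod_d /Ep det_map_mx /= mul_polyC => detE.
have E_neq0 : \det E != 0 by rewrite -unitfE -unitmxE row_ebase_unit.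
by rewrite -(dvdpZr _ _ E_neq0) /char_poly detE dvdp_mulIl.
Qed.

End CharPolyKernel.

Section SpectralGap.
Variable R : realType.
Implicit Types n : nat.

Lemma Xsqr_ndvd_spectrum (s : seq R) :
  sorted <=%R s -> 0 < s`_1 -> ~ ('X ^+ 2 %| \prod_(x <- s) ('X - x%:P)).
Proof.
case: s => [|s0 [|s1 s']] /=; rewrite ?ltxx // => /andP[_ s_path] s1_gt0.
have s_gt0 : all (fun x => 0 < x) (s1 :: s').
  rewrite /= s1_gt0; apply/allP => x xs.
  by apply: lt_le_trans s1_gt0 _; move/allP: (order_path_min le_trans s_path); apply.
set Q := \prod_(x <- s1 :: s') ('X - x%:P).
have Q0 : ~~ root Q 0.
  rewrite root_prod_XsubC; apply/negP => /(allP s_gt0).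
  by rewrite ltxx.
have XQ : coprimep ('X ^+ 2) Q.
  by rewrite coprimep_expl // coprimep_sym -(subr0 'X) -polyC0 coprimep_XsubC.
rewrite big_cons -/Q Gauss_dvdpl // => /dvdp_leq.
by rewrite size_XsubC size_polyXn -size_poly_eq0 size_XsubC => /(_ isT).
Qed.

Lemma lambda2_pos_gt1 n (A : 'M[R]_n) : lambda2_pos A -> (1 < n)%N.
Proof.
case=> s [[_ cpA] s1_gt0].
have := size_char_poly A; rewrite cpA size_prod_XsubC => -[<-].
by case: s s1_gt0 {cpA} => [|? [|? ?]] //=; rewrite ltxx.
Qed.

Lemma mulmx_tr_vdot n (u v : 'cV[R]_n) : u^T *m v = (vdot u v)%:M.
Proof. exact: mx11_scalar. Qed.

Lemma row_free_orthogonal n (u v : 'cV[R]_n) :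
  u != 0 -> v != 0 -> vdot u v = 0 -> row_free (col_mx u^T v^T).
Proof.
move=> u0 v0 uv0; apply: inj_row_free => w.
rewrite -[w]hsubmxK mul_row_col => wUV.
have coef_eq0 (c : 'rV[R]_1) (y : 'cV[R]_n) : y != 0 -> c *m (vdot y y)%:M = 0 -> c = 0.
  rewrite mul_mx_scalar => y0 /eqP; rewrite scaler_eq0 => /orP[/eqP/vdotxx_eq0 y_eq0|/eqP //].
  by rewrite y_eq0 eqxx in y0.
have /coef_eq0 -> // : lsubmx w *m (vdot u u)%:M = 0.
  have := congr1 (mulmx^~ u) wUV; rewrite mul0mx mulmxDl -!mulmxA !mulmx_tr_vdot.
  by rewrite vdotC uv0 raddf0 mulmx0 addr0.
have /coef_eq0 -> // : rsubmx w *m (vdot v v)%:M = 0.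
  have := congr1 (mulmx^~ v) wUV; rewrite mul0mx mulmxDl -!mulmxA !mulmx_tr_vdot.
  by rewrite uv0 raddf0 mulmx0 add0r.
by rewrite row_mx0.
Qed.

Lemma lambda2_pos_kernel n (A : 'M[R]_n) (x : 'cV[R]_n) :
  A^T = A -> A *m (const_mx 1 : 'cV[R]_n) = 0 -> lambda2_pos A ->
  vdot (const_mx 1) x = 0 -> A *m x = 0 -> x = 0.
Proof.
(* Otherwise 1 and x span a two-dimensional left kernel, making 0 a double root. *)
move=> As A1 A_l2 x1 Ax; apply/eqP/negPn/negP => x0.
have one0 : (const_mx 1 : 'cV[R]_n) != 0.
  apply/negP => /eqP/matrixP/(_ (Ordinal (ltnW (lambda2_pos_gt1 A_l2))) 0).
  by rewrite !mxE; apply/eqP; exact: oner_neq0.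
have UA0 : col_mx (const_mx 1 : 'cV[R]_n)^T x^T *m A = 0.
  by rewrite mul_col_mx -[A]As -!trmx_mul A1 Ax !trmx0 col_mx0.
case: A_l2 => s [[s_sorted cpA] s1_gt0].
have := char_poly_dvd_left_kernel (row_free_orthogonal one0 x0 x1) UA0.
by rewrite cpA; exact: Xsqr_ndvd_spectrum.
Qed.

Lemma psd_spectral_gap n (L : 'M[R]_n) :
  psd L -> L *m (const_mx 1 : 'cV[R]_n) = 0 -> lambda2_pos L ->
  exists2 lam, 0 < lam &
    forall v, vdot (const_mx 1) v = 0 -> lam * vdot v v <= bform L v v.
Proof.
(* L + 1 1^T agrees with L on the sum-zero vectors and is invertible by lambda2_pos_kernel. *)
move=> Lpsd L1 L_l2; set one := (const_mx 1 : 'cV[R]_n).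
set B := L + one *m one^T.
have BE v : bform B v v = bform L v v + vdot one v ^+ 2.
  rewrite bformDm /bform !mulmxA -[_ *m one^T *m v]mulmxA !mulmx_tr_vdot.
  by rewrite -scalar_mxM; congr (_ + _); rewrite mxE mulr1n vdotC expr2.
have Bpsd : psd B.
  split=> [|v]; first by rewrite /B linearD /= Lpsd.1 trmx_mul trmxK.
  by rewrite BE addr_ge0 ?sqr_ge0 ?Lpsd.2.
have Bunit : B \in unitmx.
  rewrite -unitmx_tr -row_free_unit; apply: inj_row_free => w /(congr1 trmx).
  rewrite trmx_mul trmxK trmx0 => Bw0.
  have : bform B w^T w^T = 0 by rewrite bformE Bw0 /vdot mulmx0 mxE.
  rewrite BE => /eqP; rewrite paddr_eq0 ?sqr_ge0 ?Lpsd.2 // sqrf_eq0.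
  move=> /andP[/eqP Lw0 /eqP w1].
  have := lambda2_pos_kernel Lpsd.1 L1 L_l2 w1 (psd_bform_eq0 Lpsd Lw0).
  by move/(congr1 trmx); rewrite trmxK trmx0.
have [lam lam_gt0 hlam] := psd_coercive Bpsd Bunit.
by exists lam => // v v1; have := hlam v; rewrite BE v1 expr0n /= addr0.
Qed.

End SpectralGap.

Section Laplacian.
Variables (R : realType) (N : nat).
Implicit Types (G : graph N) (p : {ffun graph N -> R}).

Local Notation adj G i j := ((G (i, j))%:R : R).

Lemma laplacianE G i j :
  laplacian R G i j = (if i == j then \sum_k adj G i k else 0) - adj G i j.
Proof.
rewrite mxE -sum1_card natr_sum big_mkcond.
by congr (_ - _); case: eqP => // _; apply: eq_bigr => k _; rewrite inE; case: (G (i, k)).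
Qed.

Lemma laplacian_const1 G : laplacian R G *m (const_mx 1 : 'cV[R]_N) = 0.
Proof.
apply/matrixP => i j; rewrite !mxE.
under eq_bigr do rewrite laplacianE mxE mulr1.
by rewrite sumrB -big_mkcond (big_pred1 i) ?subrr // => j; rewrite eq_sym.
Qed.

Lemma simple_graph_sym G i j : simple_graph G -> G (i, j) = G (j, i).
Proof. by case/andP=> /forallP/(_ i)/forallP/(_ j)/eqP. Qed.

Lemma laplacian_psd G : simple_graph G -> psd (laplacian R G).
Proof.
move=> sG; have Gsym := simple_graph_sym _ _ sG.
split=> [|v].
  apply/matrixP => i j; rewrite mxE !laplacianE Gsym eq_sym.
  by case: eqP => // ->.
set x := fun i => v i 0.
have form1 : bform (laplacian R G) v v = \sum_i \sum_j adj G i j * x i * (x i - x j).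
  rewrite bform_entries; apply: eq_bigr => i _.
  transitivity (\sum_j (if i == j then x i * (\sum_k adj G i k) * x j else 0)
                - \sum_j x i * adj G i j * x j).
    rewrite -sumrB; apply: eq_bigr => j _.
    by rewrite laplacianE; case: eqP => _; rewrite /x; ring.
  rewrite -big_mkcond (big_pred1 i) => [|j]; last by rewrite eq_sym.
  by rewrite mulr_sumr mulr_suml -sumrB; apply: eq_bigr => j _; ring.
have form2 : bform (laplacian R G) v v = \sum_i \sum_j adj G i j * x j * (x j - x i).
  by rewrite form1 exchange_big /=; apply: eq_bigr => i _; apply: eq_bigr => j _; rewrite Gsym.
have : 2 * bform (laplacian R G) v v = \sum_i \sum_j adj G i j * (x i - x j) ^+ 2.
  rewrite mulr2n mulrDl mul1r [in X in X + _]form1 form2 -big_split /=.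
  by apply: eq_bigr => i _; rewrite -big_split /=; apply: eq_bigr => j _; ring.
have : 0 <= \sum_i \sum_j adj G i j * (x i - x j) ^+ 2.
  by apply: sumr_ge0 => i _; apply: sumr_ge0 => j _; rewrite mulr_ge0 ?sqr_ge0.
lra.
Qed.

Lemma Lbar_psd p : graph_distribution p -> psd (Lbar p).
Proof.
case=> p_ge0 [_ p_simple]; split=> [|v].
  rewrite /Lbar linear_sum; apply: eq_bigr => G _; rewrite linearZ /=.
  by have [->|/p_simple sG] := eqVneq (p G) 0; rewrite ?scale0r // (laplacian_psd sG).1.
rewrite /Lbar bform_sum; apply: sumr_ge0 => G _; rewrite bformZm.
have [->|/p_simple sG] := eqVneq (p G) 0; first by rewrite mul0r.
by rewrite mulr_ge0 ?p_ge0 ?(laplacian_psd sG).2.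
Qed.

Lemma Lbar_const1 p : Lbar p *m (const_mx 1 : 'cV[R]_N) = 0.
Proof.
rewrite /Lbar mulmx_suml big1 // => G _.
by rewrite -scalemxAl laplacian_const1 scaler0.
Qed.

End Laplacian.

Section Consensus.
Variables (R : realType) (N M : nat).
Implicit Types (L : 'M[R]_N) (x y : 'I_N -> 'cV[R]_M) (u w : 'cV[R]_(\sum_(i < N) M)).

Lemma vdot_mxcol x y : vdot (\mxcol_i x i) (\mxcol_i y i) = \sum_i vdot (x i) (y i).
Proof. by rewrite /vdot tr_mxcol mul_mxrow_mxcol summxE. Qed.

Lemma bform_kronI L x y :
  bform (kronI M L) (\mxcol_i x i) (\mxcol_i y i) = \sum_i \sum_j L i j * vdot (x i) (y j).
Proof.
rewrite /bform /kronI tr_mxcol mul_mxrow_mxblock mul_mxrow_mxcol summxE exchange_big /=.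
apply: eq_bigr => j _; rewrite mulmx_suml summxE; apply: eq_bigr => i _.
by rewrite mul_mx_scalar -scalemxAl mxE.
Qed.

Lemma bform_kronI_cons L (a : 'cV[R]_M) w :
  L^T = L -> L *m (const_mx 1 : 'cV[R]_N) = 0 ->
  bform (kronI M L) (cons_vec N a + w) (cons_vec N a + w) = bform (kronI M L) w w.
Proof.
move=> Ls L1; have rows0 i : \sum_j L i j = 0.
  have := congr1 (fun v : 'cV[R]_N => v i 0) L1; rewrite !mxE.
  by under eq_bigr do rewrite mxE mulr1.
have cons_l u : bform (kronI M L) (cons_vec N a) u = 0.
  have cols0 j : \sum_i L i j = 0.
    by apply: etrans (rows0 j); apply: eq_bigr => i _; rewrite -[in LHS]Ls mxE.
  rewrite -(submxcolK u) bform_kronI exchange_big big1 // => j _.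
  by rewrite -mulr_suml cols0 mul0r.
have cons_r u : bform (kronI M L) u (cons_vec N a) = 0.
  rewrite -(submxcolK u) bform_kronI big1 // => i _.
  by rewrite -mulr_suml rows0 mul0r.
by rewrite bformDl !bformDr !cons_l cons_r !add0r.
Qed.

Definition slice w (m : 'I_M) : 'cV[R]_N := \col_i (submxcol w i m 0).

Lemma bform_kronI_slices L w :
  bform (kronI M L) w w = \sum_m bform L (slice w m) (slice w m).
Proof.
rewrite -[in LHS](submxcolK w) bform_kronI.
under eq_bigr do under eq_bigr do rewrite vdotE mulr_sumr.
under [RHS]eq_bigr do rewrite bform_entries.
under [LHS]eq_bigr do rewrite exchange_big /=.
rewrite [LHS]exchange_big /=; apply: eq_bigr => m _; apply: eq_bigr => i _.
by apply: eq_bigr => j _; rewrite !mxE; ring.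
Qed.

Lemma vdot_slices w : vdot w w = \sum_m vdot (slice w m) (slice w m).
Proof.
rewrite -[in LHS](submxcolK w) vdot_mxcol; under eq_bigr do rewrite vdotE.
under [RHS]eq_bigr do rewrite vdotE.
by rewrite exchange_big /=; apply: eq_bigr => m _; apply: eq_bigr => i _; rewrite !mxE.
Qed.

Lemma slice_perp_const1 w : (forall a, (cons_vec N a)^T *m w = 0) ->
  forall m, vdot (const_mx 1) (slice w m) = 0.
Proof.
move=> w_perp m; have := congr1 (fun A : 'M[R]_1 => A 0 0) (w_perp (delta_mx m 0)).
rewrite -[w in _ *m w](submxcolK w) /cons_vec tr_mxcol mul_mxrow_mxcol summxE mxE vdotE.
apply: etrans; apply: eq_bigr => i _; rewrite [RHS]mxE (bigD1 m) //= big1 => [|k km].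
  rewrite [(_^T) _ _]mxE [delta_mx _ _ _ _]mxE [const_mx _ _ _]mxE [slice _ _ _ _]mxE.
  by rewrite !eqxx mul1r addr0.
by rewrite [(_^T) _ _]mxE [delta_mx _ _ _ _]mxE (negbTE km) mul0r.
Qed.

Lemma kronI_spectral_gap L (lam : R) w :
  (forall v, vdot (const_mx 1) v = 0 -> lam * vdot v v <= bform L v v) ->
  (forall a, (cons_vec N a)^T *m w = 0) ->
  lam * vdot w w <= bform (kronI M L) w w.
Proof.
move=> L_gap w_perp; rewrite bform_kronI_slices vdot_slices mulr_sumr.
by apply: ler_sum => m _; apply/L_gap/slice_perp_const1.
Qed.

Lemma vdot_cons_vec (a : 'cV[R]_M) : vdot (cons_vec N a) (cons_vec N a) = N%:R * vdot a a.
Proof. by rewrite vdot_mxcol sumr_const card_ord mulr_natl. Qed.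

End Consensus.

Section Gains.
Variables (R : realType) (N M : nat) (Mn : 'I_N -> nat).
Variables (H : forall n : 'I_N, 'M[R]_(Mn n, M)) (Rm : forall n : 'I_N, 'M[R]_(Mn n)).

Lemma calH_cons_vec (a : 'cV[R]_M) : calH H *m cons_vec N a = \mxcol_i (H i *m a).
Proof.
rewrite mul_mxblock_mxrow; apply: eq_mxcol => i.
rewrite (bigD1 i) //= eqxx big1 ?addr0 // => j ji.
by rewrite eq_sym (negbTE ji) mul0mx.
Qed.

Lemma calK_mxcol (y : forall i : 'I_N, 'cV[R]_(Mn i)) :
  calK H Rm *m \mxcol_i y i = \mxcol_i (Kgain H Rm i *m y i).
Proof.
rewrite mul_mxblock_mxrow; apply: eq_mxcol => i.
rewrite (bigD1 i) //= eqxx big1 ?addr0 // => j ji.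
by rewrite eq_sym (negbTE ji) mul0mx.
Qed.

Lemma calKH_cons_vec (a : 'cV[R]_M) : Sigma_c H Rm \in unitmx -> (0 < N)%N ->
  bform (calK H Rm *m calH H) (cons_vec N a) (cons_vec N a) =
  vdot (cons_vec N a) (cons_vec N a).
Proof.
move=> Sigma_unit N_gt0.
have sum_gains : \sum_i Kgain H Rm i *m H i = N%:R%:M.
  have -> : \sum_i Kgain H Rm i *m H i =
            invmx (Sigma_c H Rm) *m \sum_i ((H i)^T *m invmx (Rm i) *m H i).
    by rewrite mulmx_sumr; apply: eq_bigr => i _; rewrite /Kgain !mulmxA.
  rewrite [X in _ *m X](_ : _ = N%:R *: Sigma_c H Rm).
    by rewrite -scalemxAr mulVmx // scalemx1.
  by rewrite /Sigma_c scalerA mulfV ?scale1r // pnatr_eq0 -lt0n.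
transitivity ((a^T *m (\sum_i Kgain H Rm i *m H i) *m a) 0 0).
  rewrite /bform -!mulmxA calH_cons_vec calK_mxcol /cons_vec tr_mxcol mul_mxrow_mxcol.
  by rewrite mulmx_suml mulmx_sumr !summxE; apply: eq_bigr => i _; rewrite -!mulmxA.
by rewrite sum_gains mul_mx_scalar -scalemxAl mxE vdot_cons_vec.
Qed.

End Gains.

Section Perturbation.
Variable R : realType.

Lemma perturbed_bform_ge n (P E : 'M[R]_n) (u w : 'cV[R]_n) (C eps : R) :
  eps < 1 -> (forall x y, `|bform P x y| <= C * vnorm x * vnorm y) ->
  bform P u u = vdot u u -> vdot u w = 0 -> opnorm E <= eps ->
  - ((C ^+ 2 / (1 - eps) + C + eps) * vnorm w ^+ 2) <= bform (P + E) (u + w) (u + w).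
Proof.
move=> eps_lt1 P_bd Pu uw0 E_le; set un := vnorm u; set wn := vnorm w.
have wu0 : vdot w u = 0 by rewrite vdotC.
have z2 : vnorm (u + w) ^+ 2 = un ^+ 2 + wn ^+ 2.
  by rewrite !vnorm_sqr -!bform1 bformDl !bformDr !bform1 uw0 wu0 addr0 add0r.
have Pz : un ^+ 2 - 2 * C * un * wn - C * wn ^+ 2 <= bform P (u + w) (u + w).
  rewrite bformDl !bformDr Pu -vnorm_sqr -/un.
  have := lerNnormlW (P_bd u w); have := lerNnormlW (P_bd w u).
  have := lerNnormlW (P_bd w w); rewrite -/un -/wn; nra.
have Ez : - (eps * (un ^+ 2 + wn ^+ 2)) <= bform E (u + w) (u + w).
  apply: lerNnormlW; apply: le_trans (bform_opnorm_bound _ _ _) _.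
  rewrite -mulrA -expr2 z2 ler_wpM2r // addr_ge0 ?sqr_ge0 //.
have square : 0 <= (1 - eps) * un ^+ 2 - 2 * C * un * wn + C ^+ 2 / (1 - eps) * wn ^+ 2.
  have e_gt0 : 0 < 1 - eps by rewrite subr_gt0.
  rewrite -(pmulr_rge0 _ e_gt0).
  have -> : (1 - eps) * ((1 - eps) * un ^+ 2 - 2 * C * un * wn + C ^+ 2 / (1 - eps) * wn ^+ 2)
           = ((1 - eps) * un - C * wn) ^+ 2 by field; rewrite gt_eqF.
  exact: sqr_ge0.
rewrite bformDm; nra.
Qed.

End Perturbation.

Section StepSizes.
Variable R : realType.

Lemma beta_w_gt0 (b tau : R) t : 0 < b -> 0 < beta_w b tau t.
Proof. by move=> b_gt0; rewrite divr_gt0 // powR_gt0 // ltr0Sn. Qed.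

Lemma alpha_w_ge0 (a tau : R) t : 0 < a -> 0 <= alpha_w a tau t.
Proof. by move=> a_gt0; rewrite divr_ge0 ?ltW ?powR_ge0. Qed.

Lemma alpha_w_le_beta_w (a b tau1 tau2 delta : R) :
  0 < a -> 0 < b -> tau2 < tau1 -> 0 < delta ->
  exists T : nat, forall t, (T <= t)%N -> alpha_w a tau1 t <= delta * beta_w b tau2 t.
Proof.
move=> a_gt0 b_gt0 tau12 delta_gt0; set g := tau1 - tau2.
have g_gt0 : 0 < g by rewrite subr_gt0.
set K := a / (delta * b).
have K_ge0 : 0 <= K by rewrite divr_ge0 ?ltW // mulr_gt0.
exists (Num.Def.archi_bound (K `^ g^-1)) => t t_ge; set x : R := t.+1%:R.
have x_gt0 : 0 < x by rewrite ltr0Sn.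
have K_le : K <= x `^ g.
  have x_ge : K `^ g^-1 <= x.
    apply/ltW/(lt_le_trans (archi_boundP (powR_ge0 _ _))).
    by rewrite ler_nat (leq_trans t_ge).
  have := ge0_ler_powR (ltW g_gt0) (powR_ge0 K g^-1) (ltW x_gt0) x_ge.
  by rewrite -powRrM mulVf ?gt_eqF // powRr1.
have x_tau1 : x `^ tau1 = x `^ g * x `^ tau2.
  by rewrite -powRD ?(gt_eqF x_gt0) ?implybT // /g subrK.
rewrite /alpha_w /beta_w -/x x_tau1.
have := powR_gt0 tau2 x_gt0; have := powR_gt0 g x_gt0 => xg_gt0 x2_gt0.
rewrite ler_pdivrMr ?mulr_gt0 //.
have -> : delta * (b / x `^ tau2) * (x `^ g * x `^ tau2) = delta * b * x `^ g.
  by field; rewrite gt_eqF.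
by move: K_le; rewrite /K ler_pdivrMr ?mulr_gt0 // mulrC.
Qed.

Lemma weighted_lower_bound (be al lam D X Y r : R) :
  0 < be -> 0 <= al -> al <= lam / (2 * D) * be -> 0 < D -> 0 <= r ->
  lam * r <= X -> - (D * r) <= Y -> lam / 2 * be * r <= be * X + al * Y.
Proof.
move=> be_gt0 al_ge0 + D_gt0 r_ge0 X_ge Y_ge.
rewrite mulrAC ler_pdivlMr ?mulr_gt0 // => al_le.
nra.
Qed.

End StepSizes.

Theorem proposition5p6 (R : realType) (N M : nat) (Mn : 'I_N -> nat)
    (H : forall n : 'I_N, 'M[R]_(Mn n, M)) (Rm : forall n : 'I_N, 'M[R]_(Mn n))
    (p : {ffun graph N -> R}) (a b tau1 tau2 eps1 : R) :
  (forall n, spd (Rm n)) ->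
  Sigma_c H Rm \in unitmx ->
  graph_distribution p ->
  lambda2_pos (Lbar p) ->
  0 < a -> 0 < b ->
  0 < tau2 -> tau2 <= tau1 -> tau1 <= 1 ->
  0 < eps1 -> tau2 + (2 + eps1)^-1 + 2^-1 < tau1 ->
  forall eps : R, 0 < eps < 1 ->
  exists (t_eps : nat) (c_eps : R), 0 < c_eps /\
    forall t : nat, (t_eps <= t)%N ->
    forall (Kt : 'M[R]_(\sum_(i < N) M, \sum_(i < N) Mn i))
           (z w : 'cV[R]_(\sum_(i < N) M)),
      opnorm (Kt *m calH H - calK H Rm *m calH H) <= eps ->
      is_Cperp_proj z w ->
      c_eps * beta_w b tau2 t * vnorm w ^+ 2 <=
        qform z (beta_w b tau2 t *: kronI M (Lbar p)
                 + alpha_w a tau1 t *: (Kt *m calH H)).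
Proof.
move=> _ Sigma_unit p_distr L_l2 a_gt0 b_gt0 _ _ _ eps1_gt0 tau_gap eps /andP[eps_gt0 eps_lt1].
have Lpsd := Lbar_psd p_distr.
have [lam lam_gt0 L_gap] := psd_spectral_gap Lpsd (Lbar_const1 p) L_l2.
have tau12 : tau2 < tau1.
  have : 0 < (2 + eps1)^-1 by rewrite invr_gt0 addr_gt0.
  have : 0 < (2 : R)^-1 by rewrite invr_gt0.
  lra.
set P := calK H Rm *m calH H; have [C C_ge0 P_bd] := bform_bounded P.
set D := C ^+ 2 / (1 - eps) + C + eps.
have D_gt0 : 0 < D by rewrite ltr_wpDl // addr_ge0 // divr_ge0 ?sqr_ge0 // subr_ge0 ltW.
have delta_gt0 : 0 < lam / (2 * D) by rewrite divr_gt0 ?mulr_gt0.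
have [T alpha_le] := alpha_w_le_beta_w a_gt0 b_gt0 tau12 delta_gt0.
exists T, (lam / 2); split => [|t tT Kt z w E_le [[c zE] w_perp]]; first by rewrite divr_gt0.
have z_split : z = cons_vec N c + w by rewrite -zE subrK.
have kron_ge : lam * vnorm w ^+ 2 <= bform (kronI M (Lbar p)) z z.
  rewrite z_split bform_kronI_cons ?Lpsd.1 ?Lbar_const1 // vnorm_sqr.
  exact: kronI_spectral_gap.
have KH_ge : - (D * vnorm w ^+ 2) <= bform (Kt *m calH H) z z.
  rewrite z_split -(subrK P (Kt *m calH H)) addrC.
  apply: perturbed_bform_ge => //; last by rewrite /vdot w_perp mxE.
  exact: calKH_cons_vec Sigma_unit (ltnW (lambda2_pos_gt1 L_l2)).
rewrite /qform -/(bform _ z z) bformDm !bformZm.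
by apply: weighted_lower_bound kron_ge KH_ge; rewrite ?alpha_le ?beta_w_gt0 ?alpha_w_ge0 ?sqr_ge0.
Qed.
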